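(* Let $Z$ be a compact metrisable space and $\mathfrak{X}$ a $Z$-valued switched Bebutov shift. Let $(\psi_n)_{n=1}^\infty$ be a sequence in $\mathfrak{X}$, and suppose there is a strictly increasing unbounded real sequence $(\tau_n)_{n=0}^\infty$ with $\tau_0=0$ such that $\psi_n(\tau_n)=\psi_{n+1}(\tau_n)$ for each $n\ge1$. Let $\xi\colon[0,\infty)\to Z$ be the function which coincides with $\psi_n$ on $[\tau_{n-1},\tau_n]$ for each $n\ge1$. Then $\xi\in\mathfrak{X}$.
   Context: $C([0,\infty),Z)$ carries the compact-open topology (uniform convergence on compact sets). $(\sigma^\tau\phi)(t)\coloneq\phi(\tau+t)$. A $Z$-valued Bebutov shift is a set $\mathfrak{X}\subseteq C([0,\infty),Z)$, compact in the compact-open topology, with $\sigma^\tau\phi\in\mathfrak{X}$ for all $\phi\in\mathfrak{X}$, $\tau\ge0$. It is switched if moreover: whenever $\phi_1,\phi_2\in\mathfrak{X}$ satisfy $\phi_1(\tau)=\phi_2(\tau)$ for some $\tau>0$, the function $\psi$ equal to $\phi_1$ on $[0,\tau]$ and to $\phi_2$ on $[\tau,\infty)$ belongs to $\mathfrak{X}$. *)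

From HB Require Import structures.
From mathcomp Require Import all_boot all_order all_algebra.
From mathcomp Require Import all_classical all_reals all_analysis.
From mathcomp Require Import subtype_topology.
Import numFieldNormedType.Exports.
Set Implicit Arguments. Unset Strict Implicit. Unset Printing Implicit Defensive.
Import Order.TTheory GRing.Theory Num.Theory.
Local Open Scope classical_set_scope.
Local Open Scope ring_scope.

(* The half-line [0, +oo) as a topological space (subspace topology on the
   sigma type, via the library's set_type instance). *)
Notation halfline R := (set_type (`[0, +oo[%classic : set R)).

(* Coercion of a real into [0,+oo): x |-> max x 0 (only used with x >= 0). *)
Lemma halfline_mem (R : realType) (x : R) :
  (`[0, +oo[%classic : set R) (Num.max x 0).
Proof.
rewrite /= in_itv /= andbT le_max lexx orbT //.
Qed.

Definition toH (R : realType) (x : R) : halfline R :=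
  exist _ (Num.max x 0) (mem_set (halfline_mem x)).

Definition hval (R : realType) (t : halfline R) : R := set_val t.

Definition bshift (R : realType) (Z : Type) (tau : R) (phi : halfline R -> Z)
  : halfline R -> Z := fun t => phi (toH (tau + hval t)).

Definition bebutov_shift (R : realType) (Z : topologicalType)
    (X : set {compact-open, halfline R -> Z}) : Prop :=
  [/\ (forall phi, X phi -> continuous (phi : halfline R -> Z)),
      compact X &
      (forall phi tau, X phi -> 0 <= tau -> X (bshift tau phi))].

Definition switch (R : realType) (Z : Type) (tau : R)
    (phi1 phi2 : halfline R -> Z) : halfline R -> Z :=
  fun t => if hval t <= tau then phi1 t else phi2 t.

Definition switched_bebutov_shift (R : realType) (Z : topologicalType)
    (X : set {compact-open, halfline R -> Z}) : Prop :=
  bebutov_shift X /\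
  (forall (phi1 phi2 : {compact-open, halfline R -> Z}) (tau : R),
      X phi1 -> X phi2 -> 0 < tau -> phi1 (toH tau) = phi2 (toH tau) ->
      X (switch tau phi1 phi2 : {compact-open, halfline R -> Z})).

From HB Require Import structures.
From mathcomp Require Import all_boot all_order all_algebra.
From mathcomp Require Import all_classical all_reals all_analysis.
From mathcomp Require Import subtype_topology.
Import numFieldNormedType.Exports.
Set Implicit Arguments. Unset Strict Implicit. Unset Printing Implicit Defensive.
Import Order.TTheory Order.NatMonotonyTheory GRing.Theory Num.Theory.
Local Open Scope classical_set_scope.
Local Open Scope ring_scope.

(* The finite concatenations psi_1 | ... | psi_(n+1), switched at
   tau_1, ..., tau_n, all lie in X by the switching property, and at every
   time t they eventually agree with xi.  By compactness of X they have a
   cluster point y in X, and since evaluation at t is continuous for the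
   compact-open topology and Z is Hausdorff, y t = xi t. *)

Section evaluation.
Variables (T Z : topologicalType).

Lemma compact_open_eval_continuous (t : T) :
  continuous (fun f : {compact-open, T -> Z} => f t).
Proof.
move=> f B /= Bft.
have Of : open_nbhs f [set g | g @` [set t] `<=` interior B].
  split; last by move=> _ [s -> <-].
  by apply: compact_open_open; [exact: compact_set1 | exact: open_interior].
apply: filterS (open_nbhs_nbhs Of) => g gB.
by apply: interior_subset; apply: gB; exists t.
Qed.

Hypothesis Zhaus : hausdorff_space Z.

Lemma cluster_eval_eventually (f : nat -> {compact-open, T -> Z})
    (y : {compact-open, T -> Z}) (t : T) (z : Z) :
  cluster (f @ \oo) y -> (\forall n \near \oo, f n t = z) -> y t = z.
Proof.
move=> cly ftz; apply: Zhaus => A B Ayt Bz.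
have [h [/= htz hA]] :=
  cly [set g | g t = z] _ ftz (compact_open_eval_continuous Ayt).
by exists z; split; [rewrite -htz | exact: nbhs_singleton].
Qed.

Lemma compact_mem_eventually_pointwise (X : set {compact-open, T -> Z})
    (f : nat -> {compact-open, T -> Z}) (g : {compact-open, T -> Z}) :
  compact X -> (forall n, X (f n)) ->
  (forall t, \forall n \near \oo, f n t = g t) -> X g.
Proof.
move=> cX Xf fg.
have [y [Xy cly]] : X `&` cluster (f @ \oo) !=set0.
  by apply: cX; exists 0%N => // n _; exact: Xf.
suff -> : g = y by [].
by apply/funext => t; rewrite (cluster_eval_eventually cly (fg t)).
Qed.

End evaluation.

Section halfline.
Variable R : realType.

Lemma hval_ge0 (t : halfline R) : 0 <= hval t.
Proof. by have := set_valP t; rewrite /= in_itv /= andbT. Qed.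

Lemma hval_toH (x : R) : 0 <= x -> hval (toH x) = x.
Proof. exact: max_l. Qed.

Lemma toH_hval (t : halfline R) : toH (hval t) = t.
Proof. by apply: val_inj; rewrite /= max_l // hval_ge0. Qed.

End halfline.

Section concatenation.
Variables (R : realType) (Z : topologicalType).
Variables (X : set {compact-open, halfline R -> Z})
  (psi : nat -> {compact-open, halfline R -> Z}) (tau : nat -> R).
Hypotheses (HX : switched_bebutov_shift X)
  (Xpsi : forall n, (1 <= n)%N -> X (psi n))
  (tau0 : tau 0%N = 0) (tau_incr : forall n, tau n < tau n.+1)
  (psi_match : forall n, (1 <= n)%N ->
     psi n (toH (tau n)) = psi n.+1 (toH (tau n))).

Lemma tau_gt0 n : 0 < tau n.+1.
Proof. by rewrite -tau0; apply: (homo_ltn_lt tau_incr). Qed.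

Fixpoint concat (n : nat) : {compact-open, halfline R -> Z} :=
  if n is m.+1 then switch (tau m.+1) (concat m) (psi m.+2) else psi 1%N.

Lemma concat_tail n t : tau n <= hval t -> concat n t = psi n.+1 t.
Proof.
elim: n t => [//|n IH] t tau_t /=; rewrite /switch; case: ifP => // t_tau.
have e : hval t = tau n.+1 by apply/eqP; rewrite eq_le t_tau tau_t.
by rewrite IH ?e ?ltW // -(toH_hval t) e psi_match.
Qed.

Lemma concat_mem n : X (concat n).
Proof.
elim: n => [|n IH] /=; first exact: Xpsi.
apply: HX.2 => //; [exact: Xpsi | exact: tau_gt0 |].
by rewrite concat_tail ?psi_match // hval_toH ltW ?tau_gt0.
Qed.

Variable xi : {compact-open, halfline R -> Z}.
Hypothesis xi_psi : forall n t, (1 <= n)%N ->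
  tau n.-1 <= hval t <= tau n -> xi t = psi n t.

Lemma concat_head n t : hval t <= tau n.+1 -> concat n t = xi t.
Proof.
elim: n t => [|n IH] t t_tau /=; first by rewrite (xi_psi (n:=1)) ?tau0 ?hval_ge0.
rewrite /switch; case: ifP => tau_t; first exact: IH.
by rewrite (xi_psi (n:=n.+2)) //= t_tau andbT ltW // ltNge tau_t.
Qed.

Hypothesis tau_unbounded : forall M, exists n, M < tau n.

Lemma concat_eventually (t : halfline R) :
  \forall n \near \oo, concat n t = xi t.
Proof.
have [N t_tauN] := tau_unbounded (hval t).
exists N => // n /= Nn; apply: concat_head.
apply: le_trans (ltW t_tauN) _.
by rewrite (incnP tau_incr); apply: leqW.
Qed.

End concatenation.

Theorem lemma2p19 (R : realType) (Z : pseudoMetricType R)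
  (Zhaus : hausdorff_space Z) (Zcpt : compact [set: Z])
  (X : set {compact-open, halfline R -> Z})
  (HX : switched_bebutov_shift X)
  (psi : nat -> {compact-open, halfline R -> Z})
  (Hpsi : forall n : nat, (1 <= n)%N -> X (psi n))
  (tau : nat -> R)
  (Htau0 : tau 0%N = 0)
  (Htau_incr : forall n : nat, tau n < tau n.+1)
  (Htau_unb : forall M : R, exists n : nat, M < tau n)
  (Hmatch : forall n : nat, (1 <= n)%N -> psi n (toH (tau n)) = psi n.+1 (toH (tau n)))
  (xi : {compact-open, halfline R -> Z})
  (Hxi : forall (n : nat) (t : halfline R), (1 <= n)%N ->
           tau n.-1 <= hval t <= tau n -> xi t = psi n t) :
  X xi.
Proof.
have [_ cX _] := HX.1.
apply: (compact_mem_eventually_pointwise Zhaus cX).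
- exact: concat_mem HX Hpsi Htau0 Htau_incr Hmatch.
- by move=> t; apply: (concat_eventually Htau0 Htau_incr Hxi Htau_unb t).
Qed.
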